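(* Let $\Gamma$ be a finite undirected graph in which any two adjacent vertices have exactly one common neighbor. Then $G_{aut}^+(\Gamma)=G_{aut}^*(\Gamma)$. In particular, $G_{aut}^+(\Gamma)=G_{aut}^*(\Gamma)$ for every distance-regular graph $\Gamma$ whose intersection array satisfies $b_0=b_1+2$.
   Context: $\Gamma=(V,E)$ is a finite simple undirected graph, $V=\{1,\dots,n\}$. $C(G_{aut}^+(\Gamma))$ is the universal unital $C^*$-algebra generated by $u_{ij}$, $1\le i,j\le n$, with relations: (R1) $u_{ij}=u_{ij}^*=u_{ij}^2$; (R2) $\sum_{l} u_{il}=1=\sum_{l} u_{li}$ for all $i$; (R3) $u_{ij}u_{kl}=u_{kl}u_{ij}=0$ whenever exactly one of $(i,k)\in E$, $(j,l)\in E$ holds. ''$G_{aut}^+(\Gamma)=G_{aut}^*(\Gamma)$'' means that $u_{ij}u_{kl}=u_{kl}u_{ij}$ holds in $C(G_{aut}^+(\Gamma))$ for all $(i,k)\in E$, $(j,l)\in E$. A connected regular graph is distance-regular with diameter $D$ and intersection array $\{b_0,\dots,b_{D-1};c_1,\dots,c_D\}$ if for any vertices $v,w$ with $d(v,w)=i$, exactly $b_i$ neighbors of $w$ are at distance $i+1$ from $v$ and exactly $c_i$ neighbors of $w$ are at distance $i-1$ from $v$ (these numbers depending only on $i$). *)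

From Stdlib Require Import Reals List.
Set Implicit Arguments.

Definition Cx : Type := (R * R)%type.
Definition Cx1 : Cx := (1%R, 0%R).
Definition Cxadd (a b : Cx) : Cx := (fst a + fst b, snd a + snd b)%R.
Definition Cxmul (a b : Cx) : Cx :=
  (fst a * fst b - snd a * snd b, fst a * snd b + snd a * fst b)%R.
Definition Cxconj (a : Cx) : Cx := (fst a, - snd a)%R.
Definition Cxmod (a : Cx) : R := sqrt (fst a * fst a + snd a * snd a)%R.

(** * Unital C*-algebras (the zero algebra is allowed) *)
Record CStarAlgebra := {
  car :> Type;
  czero : car;
  cone : car;
  cadd : car -> car -> car;
  copp : car -> car;
  cmul : car -> car -> car;
  cscal : Cx -> car -> car;
  cstar : car -> car;
  cnorm : car -> R;
  cadd_assoc : forall x y z, cadd x (cadd y z) = cadd (cadd x y) z;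
  cadd_comm : forall x y, cadd x y = cadd y x;
  cadd_0l : forall x, cadd czero x = x;
  cadd_oppl : forall x, cadd (copp x) x = czero;
  cscal_1 : forall x, cscal Cx1 x = x;
  cscal_assoc : forall a b x, cscal a (cscal b x) = cscal (Cxmul a b) x;
  cscal_addl : forall a b x, cscal (Cxadd a b) x = cadd (cscal a x) (cscal b x);
  cscal_addr : forall a x y, cscal a (cadd x y) = cadd (cscal a x) (cscal a y);
  cmul_assoc : forall x y z, cmul x (cmul y z) = cmul (cmul x y) z;
  cmul_1l : forall x, cmul cone x = x;
  cmul_1r : forall x, cmul x cone = x;
  cmul_addl : forall x y z, cmul (cadd x y) z = cadd (cmul x z) (cmul y z);
  cmul_addr : forall x y z, cmul x (cadd y z) = cadd (cmul x y) (cmul x z);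
  cscal_mull : forall a x y, cmul (cscal a x) y = cscal a (cmul x y);
  cscal_mulr : forall a x y, cmul x (cscal a y) = cscal a (cmul x y);
  cstar_invol : forall x, cstar (cstar x) = x;
  cstar_add : forall x y, cstar (cadd x y) = cadd (cstar x) (cstar y);
  cstar_mul : forall x y, cstar (cmul x y) = cmul (cstar y) (cstar x);
  cstar_scal : forall a x, cstar (cscal a x) = cscal (Cxconj a) (cstar x);
  cnorm_def : forall x, cnorm x = 0%R -> x = czero;
  cnorm_tri : forall x y, (cnorm (cadd x y) <= cnorm x + cnorm y)%R;
  cnorm_scal : forall a x, cnorm (cscal a x) = (Cxmod a * cnorm x)%R;
  cnorm_submul : forall x y, (cnorm (cmul x y) <= cnorm x * cnorm y)%R;
  ccomplete : forall s : nat -> car,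
    (forall eps, (0 < eps)%R -> exists N, forall p q, (N <= p)%nat -> (N <= q)%nat ->
        (cnorm (cadd (s p) (copp (s q))) < eps)%R) ->
    exists l, forall eps, (0 < eps)%R -> exists N, forall p, (N <= p)%nat ->
        (cnorm (cadd (s p) (copp l)) < eps)%R;
  cstar_id : forall x, cnorm (cmul (cstar x) x) = (cnorm x * cnorm x)%R
}.

Fixpoint csum (A : CStarAlgebra) (f : nat -> A) (m : nat) : A :=
  match m with
  | O => czero A
  | S m' => cadd A (csum A f m') (f m')
  end.

(** * Graphs.  Vertex set {0,...,n-1} (the paper's {1,...,n} shifted by one);
    E is the adjacency relation. *)
Definition simple_graph (n : nat) (E : nat -> nat -> Prop) : Prop :=
  (forall i k, E i k -> (i < n)%nat /\ (k < n)%nat) /\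
  (forall i k, E i k -> E k i) /\
  (forall i, ~ E i i).

(** The relations (R1)-(R3) of C(G_aut^+(Gamma)) for a family u in A. *)
Definition qaut_relations (n : nat) (E : nat -> nat -> Prop)
  (A : CStarAlgebra) (u : nat -> nat -> A) : Prop :=
  (forall i j, (i < n)%nat -> (j < n)%nat ->
      cstar A (u i j) = u i j /\ cmul A (u i j) (u i j) = u i j) /\
  (forall i, (i < n)%nat ->
      csum A (fun l => u i l) n = cone A /\ csum A (fun l => u l i) n = cone A) /\
  (forall i j k l, (i < n)%nat -> (j < n)%nat -> (k < n)%nat -> (l < n)%nat ->
      ~ (E i k <-> E j l) ->
      cmul A (u i j) (u k l) = czero A /\ cmul A (u k l) (u i j) = czero A).

(** G_aut^+(Gamma) = G_aut^*(Gamma): in the universal C*-algebra the generators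
    u_ij, u_kl commute for (i,k), (j,l) edges.  Equivalently (universal property),
    this holds for every family satisfying (R1)-(R3) in every unital C*-algebra. *)
Definition Gaut_plus_eq_star (n : nat) (E : nat -> nat -> Prop) : Prop :=
  forall (A : CStarAlgebra) (u : nat -> nat -> A),
    qaut_relations n E A u ->
    forall i j k l, E i k -> E j l ->
      cmul A (u i j) (u k l) = cmul A (u k l) (u i j).

Inductive walk (E : nat -> nat -> Prop) : nat -> nat -> nat -> Prop :=
  | walk0 : forall v, walk E v v 0
  | walkS : forall v x w m, E v x -> walk E x w m -> walk E v w (S m).

Definition dist (E : nat -> nat -> Prop) (v w d : nat) : Prop :=
  walk E v w d /\ forall m, walk E v w m -> (d <= m)%nat.

Definition card_eq (P : nat -> Prop) (k : nat) : Prop :=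
  exists l : list nat, NoDup l /\ length l = k /\ forall x, In x l <-> P x.

(** Gamma is distance-regular with diameter D and intersection numbers
    b_i (0 <= i <= D, so b_D = 0) and c_i (1 <= i <= D). *)
Definition distance_regular (n : nat) (E : nat -> nat -> Prop)
  (D : nat) (b c : nat -> nat) : Prop :=
  (forall v w, (v < n)%nat -> (w < n)%nat -> exists d, dist E v w d) /\
  (exists k, forall v, (v < n)%nat -> card_eq (fun w => E v w) k) /\
  (exists v w, (v < n)%nat /\ (w < n)%nat /\ dist E v w D) /\
  (forall v w d, (v < n)%nat -> (w < n)%nat -> dist E v w d -> (d <= D)%nat) /\
  (forall i v w, (i <= D)%nat -> (v < n)%nat -> (w < n)%nat -> dist E v w i ->
     card_eq (fun x => E w x /\ dist E v x (S i)) (b i)) /\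
  (forall i v w, (1 <= i)%nat -> (i <= D)%nat -> (v < n)%nat -> (w < n)%nat ->
     dist E v w i ->
     card_eq (fun x => E w x /\ dist E v x (i - 1)) (c i)).

(* If every edge [ik] lies in exactly one triangle [ikm], then for edges [ik], [jl] with
   third vertices [m], [p] one may insert [u m p] between [u i j] and [u k l]: expanding
   [1 = sum_a u a p], relation (R3) kills every term except [a = m].  The triangles being
   symmetric, this holds in every order, and three such insertions make the compression
   [a b a] of the projections [a = u i j], [b = u k l] idempotent.  In a C*-algebra this
   forces [a b = b a].
   For an edge [vw] of a distance-regular graph, the [b_0 - b_1] neighbours of [w] not at
   distance 2 from [v] are [v] itself and the common neighbours of [v] and [w]; so
   [b_0 = b_1 + 2] means every edge has exactly one common neighbour. *)

From Pilot Require Import Defs.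
From Stdlib Require Import Reals List Classical Lia.

Set Implicit Arguments.

Local Infix "⊕" := (cadd _) (at level 50, left associativity).
Local Infix "⋅" := (cmul _) (at level 40, left associativity).

Definition is_projection (A : CStarAlgebra) (x : A) : Prop :=
  cstar A x = x /\ x ⋅ x = x.

Section Algebra.
Variable A : CStarAlgebra.
Implicit Types x y z : A.

Lemma cadd_0r x : x ⊕ czero A = x.
Proof. rewrite cadd_comm; apply cadd_0l. Qed.

Lemma cadd_cancel_l x y z : x ⊕ y = x ⊕ z -> y = z.
Proof.
  intro H.
  rewrite <- (cadd_0l A y), <- (cadd_0l A z), <- (cadd_oppl A x),
    <- !cadd_assoc, H.
  reflexivity.
Qed.

Lemma cadd_idem_eq0 x : x ⊕ x = x -> x = czero A.
Proof. intro H. apply (cadd_cancel_l x). rewrite cadd_0r. exact H. Qed.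

Lemma copp_unique x y z : x ⊕ z = czero A -> y ⊕ z = czero A -> x = y.
Proof.
  intros Hx Hy. apply (cadd_cancel_l z).
  rewrite (cadd_comm A z x), (cadd_comm A z y), Hx, Hy.
  reflexivity.
Qed.

Lemma subr_eq0 x y : x ⊕ copp A y = czero A -> x = y.
Proof.
  intro H. apply (copp_unique _ _ (copp A y)); [exact H|].
  rewrite cadd_comm; apply cadd_oppl.
Qed.

Lemma copp_opp x : copp A (copp A x) = x.
Proof.
  apply (copp_unique _ _ (copp A x)); [apply cadd_oppl|].
  rewrite cadd_comm; apply cadd_oppl.
Qed.

Lemma cmul_0l x : czero A ⋅ x = czero A.
Proof. apply cadd_idem_eq0. rewrite <- cmul_addl, cadd_0l. reflexivity. Qed.

Lemma cmul_0r x : x ⋅ czero A = czero A.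
Proof. apply cadd_idem_eq0. rewrite <- cmul_addr, cadd_0l. reflexivity. Qed.

Lemma cmul_oppl x y : copp A x ⋅ y = copp A (x ⋅ y).
Proof.
  apply (copp_unique _ _ (x ⋅ y)); [|apply cadd_oppl].
  rewrite <- cmul_addl, cadd_oppl. apply cmul_0l.
Qed.

Lemma cmul_oppr x y : x ⋅ copp A y = copp A (x ⋅ y).
Proof.
  apply (copp_unique _ _ (x ⋅ y)); [|apply cadd_oppl].
  rewrite <- cmul_addr, cadd_oppl. apply cmul_0r.
Qed.

Lemma cstar_0 : cstar A (czero A) = czero A.
Proof. apply cadd_idem_eq0. rewrite <- cstar_add, cadd_0l. reflexivity. Qed.

Lemma cstar_opp x : cstar A (copp A x) = copp A (cstar A x).
Proof.
  apply (copp_unique _ _ (cstar A x)); [|apply cadd_oppl].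
  rewrite <- cstar_add, cadd_oppl. apply cstar_0.
Qed.

Lemma cnorm_0 : cnorm A (czero A) = 0%R.
Proof.
  assert (Hscal0 : cscal A (0, 0)%R (czero A) = czero A).
  { apply cadd_idem_eq0. rewrite <- cscal_addl.
    unfold Cxadd; simpl. rewrite Rplus_0_l. reflexivity. }
  rewrite <- Hscal0, cnorm_scal. unfold Cxmod; simpl.
  rewrite Rmult_0_l, Rplus_0_l, sqrt_0, Rmult_0_l. reflexivity.
Qed.

Lemma cmul_star_eq0 x : x ⋅ cstar A x = czero A -> x = czero A.
Proof.
  intro H.
  assert (Hn := cstar_id A (cstar A x)).
  rewrite cstar_invol, H, cnorm_0 in Hn.
  assert (Hstar : cstar A x = czero A).
  { apply cnorm_def. symmetry in Hn.
    destruct (Rmult_integral _ _ Hn); assumption. }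
  rewrite <- (cstar_invol A x), Hstar. apply cstar_0.
Qed.

(* The C*-identity gives [(pq - pqp)(pq - pqp)^* = pqp - (pqp)^2 = 0]. *)
Lemma projections_commute (p q : A) :
  is_projection A p -> is_projection A q ->
  p ⋅ q ⋅ p ⋅ (p ⋅ q ⋅ p) = p ⋅ q ⋅ p -> p ⋅ q = q ⋅ p.
Proof.
  intros [Sp Ip] [Sq Iq] Hidem.
  assert (H5 : p ⋅ q ⋅ p ⋅ q ⋅ p = p ⋅ q ⋅ p).
  { rewrite <- Hidem at 2. rewrite !cmul_assoc, <- (cmul_assoc A _ p p), Ip. reflexivity. }
  assert (Hstar : cstar A (p ⋅ q) = q ⋅ p) by (rewrite cstar_mul, Sp, Sq; reflexivity).
  assert (Hsym : cstar A (p ⋅ q ⋅ p) = p ⋅ q ⋅ p)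
    by (rewrite !cstar_mul, Sp, Sq, cmul_assoc; reflexivity).
  assert (Hcomp : p ⋅ q = p ⋅ q ⋅ p).
  { apply subr_eq0, cmul_star_eq0.
    rewrite cstar_add, cstar_opp, Hstar, Hsym, cmul_addl, !cmul_addr,
      !cmul_oppl, !cmul_oppr, copp_opp, !cmul_assoc, H5,
      <- (cmul_assoc A p q q), Iq, <- (cmul_assoc A _ p p), Ip, H5,
      cadd_oppl, cadd_0r, cadd_comm.
    apply cadd_oppl. }
  rewrite <- Hstar, Hcomp, Hsym. reflexivity.
Qed.

Lemma triangle_compression_idem (a b c : A) :
  a ⋅ a = a -> a ⋅ b = a ⋅ c ⋅ b -> c ⋅ a = c ⋅ b ⋅ a -> c ⋅ b = c ⋅ a ⋅ b ->
  a ⋅ b ⋅ a ⋅ (a ⋅ b ⋅ a) = a ⋅ b ⋅ a.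
Proof.
  intros Ia Hab Hca Hcb.
  assert (Haba : a ⋅ b ⋅ a = a ⋅ c ⋅ a).
  { rewrite Hab, <- !cmul_assoc, (cmul_assoc A c b a), <- Hca. reflexivity. }
  assert (Hcaba : c ⋅ a ⋅ b ⋅ a = c ⋅ a) by (rewrite <- Hcb, <- Hca; reflexivity).
  rewrite !cmul_assoc, <- (cmul_assoc A _ a a), Ia, Haba.
  transitivity (a ⋅ (c ⋅ a ⋅ b ⋅ a)); [rewrite !cmul_assoc; reflexivity|].
  rewrite Hcaba, cmul_assoc. reflexivity.
Qed.

Lemma csum_mull x (f : nat -> A) m : x ⋅ csum A f m = csum A (fun a => x ⋅ f a) m.
Proof.
  induction m as [|m IH]; simpl; [apply cmul_0r|].
  rewrite cmul_addr, IH. reflexivity.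
Qed.

Lemma csum_mulr x (f : nat -> A) m : csum A f m ⋅ x = csum A (fun a => f a ⋅ x) m.
Proof.
  induction m as [|m IH]; simpl; [apply cmul_0l|].
  rewrite cmul_addl, IH. reflexivity.
Qed.

Lemma csum_eq0 (f : nat -> A) m :
  (forall a, (a < m)%nat -> f a = czero A) -> csum A f m = czero A.
Proof.
  induction m as [|m IH]; intro Hf; simpl; [reflexivity|].
  rewrite IH by (intros; apply Hf; lia). rewrite Hf by lia. apply cadd_0l.
Qed.

Lemma csum_single (f : nat -> A) m c : (c < m)%nat ->
  (forall a, (a < m)%nat -> a <> c -> f a = czero A) -> csum A f m = f c.
Proof.
  induction m as [|m IH]; intros Hc Hf; simpl; [lia|].
  destruct (Nat.eq_dec c m) as [->|Hcm].
  - rewrite csum_eq0, cadd_0l; [reflexivity|].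
    intros a Ha. apply Hf; lia.
  - rewrite IH by (lia || (intros; apply Hf; lia)).
    rewrite (Hf m), cadd_0r by lia. reflexivity.
Qed.

End Algebra.

Definition unique_common_neighbour (E : nat -> nat -> Prop) (i k m : nat) : Prop :=
  E i m /\ E k m /\ forall m', E i m' -> E k m' -> m' = m.

Lemma qaut_mul_insert n E (A : CStarAlgebra) (u : nat -> nat -> A) :
  simple_graph n E -> qaut_relations n E A u ->
  forall i j k l m p, unique_common_neighbour E i k m -> E j p -> E l p ->
  u i j ⋅ u k l = u i j ⋅ u m p ⋅ u k l.
Proof.
  intros [Hbound [Hsym _]] [_ [R2 R3]] i j k l m p [Him [Hkm Huniq]] Hjp Hlp.
  destruct (Hbound _ _ Him), (Hbound _ _ Hkm), (Hbound _ _ Hjp), (Hbound _ _ Hlp).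
  transitivity (u i j ⋅ csum A (fun a => u a p) n ⋅ u k l).
  { rewrite (proj2 (R2 p ltac:(lia))), cmul_1r. reflexivity. }
  rewrite csum_mull, csum_mulr.
  apply (csum_single A (fun a => u i j ⋅ u a p ⋅ u k l)); [assumption|].
  intros a Ha Ham.
  destruct (classic (E i a)) as [Hia|Hia].
  - assert (Hka : ~ E k a) by (intro Hka; exact (Ham (Huniq a Hia Hka))).
    rewrite <- cmul_assoc, (proj1 (R3 a p k l Ha ltac:(lia) ltac:(lia) ltac:(lia)
      ltac:(intros [_ Hiff]; apply Hka, Hsym, Hiff, Hsym, Hlp))).
    apply cmul_0r.
  - rewrite (proj1 (R3 i j a p ltac:(lia) ltac:(lia) Ha ltac:(lia)
      ltac:(intros [_ Hiff]; apply Hia, Hiff, Hjp))).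
    apply cmul_0l.
Qed.

Lemma unique_common_neighbour_triangle E :
  (forall i k, E i k -> exists m, unique_common_neighbour E i k m) ->
  forall x y z, E x y -> E x z -> E y z -> unique_common_neighbour E x y z.
Proof.
  intros Hucn x y z Hxy Hxz Hyz.
  destruct (Hucn x y Hxy) as [m [_ [_ Hm]]].
  repeat split; try assumption.
  intros w Hxw Hyw. rewrite (Hm w), (Hm z); auto.
Qed.

Theorem Gaut_plus_eq_star_of_unique_common_neighbours n E :
  simple_graph n E ->
  (forall i k, E i k -> exists m, unique_common_neighbour E i k m) ->
  Gaut_plus_eq_star n E.
Proof.
  intros HE Hucn A u Hu i j k l Hik Hjl.
  pose proof HE as [Hbound [Hsym _]].
  destruct (Hucn i k Hik) as [m [Him [Hkm _]]].
  destruct (Hucn j l Hjl) as [p [Hjp [Hlp _]]].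
  assert (Htri := unique_common_neighbour_triangle Hucn).
  assert (Hins := qaut_mul_insert HE Hu).
  destruct (Hbound _ _ Hik), (Hbound _ _ Hjl).
  pose proof Hu as [R1 _].
  apply projections_commute; try (apply R1; assumption).
  apply (triangle_compression_idem _ _ (u m p)); [apply R1; assumption|..].
  - apply Hins; auto.
  - apply Hins; auto.
  - apply Hins; auto.
Qed.

Lemma walk_0_inv E v w : walk E v w 0 -> v = w.
Proof. intro H. inversion H. reflexivity. Qed.

Lemma walk_1_inv E v w : walk E v w 1 -> E v w.
Proof.
  intro H. inversion H as [|? x ? ? Hvx Hxw]; subst.
  apply walk_0_inv in Hxw. subst. exact Hvx.
Qed.

Lemma dist_refl E v : Defs.dist E v v 0.
Proof. split; [apply walk0 | intros; lia]. Qed.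

Lemma dist_unique {E v w d d'} : Defs.dist E v w d -> Defs.dist E v w d' -> d = d'.
Proof.
  intros [Hd Hmin] [Hd' Hmin'].
  apply Nat.le_antisymm; [apply Hmin | apply Hmin']; assumption.
Qed.

Lemma dist_edge {E v w} : (forall i, ~ E i i) -> E v w -> Defs.dist E v w 1.
Proof.
  intros Hirr Hvw. split; [apply walkS with w; [exact Hvw | apply walk0]|].
  intros [|m] Hm; [|lia].
  apply walk_0_inv in Hm. subst. contradiction (Hirr w).
Qed.

Lemma card_eq_ext (P Q : nat -> Prop) k :
  (forall x, P x <-> Q x) -> card_eq P k -> card_eq Q k.
Proof.
  intros HPQ [l [Hnd [Hlen Hin]]].
  exists l. split; [|split]; try assumption.
  intro x. rewrite Hin, HPQ. reflexivity.
Qed.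

Lemma card_eq_diff {P Q : nat -> Prop} {m d} :
  card_eq P (m + d) -> card_eq Q m -> (forall x, Q x -> P x) ->
  card_eq (fun x => P x /\ ~ Q x) d.
Proof.
  intros [lP [NP [LP IP]]] [lQ [NQ [LQ IQ]]] HQP.
  set (inQ := fun x => if in_dec Nat.eq_dec x lQ then true else false).
  assert (HinQ : forall x, inQ x = true <-> Q x).
  { intro x. unfold inQ. rewrite <- IQ.
    destruct (in_dec Nat.eq_dec x lQ); split; congruence || tauto. }
  assert (Hlen : length (filter inQ lP) = m).
  { rewrite <- LQ. apply Nat.le_antisymm; apply NoDup_incl_length;
      try (apply NoDup_filter); try assumption;
      intros x Hx; [apply filter_In in Hx | apply filter_In];
      rewrite ?HinQ, ?IQ, ?IP in *; intuition. }
  exists (filter (fun x => negb (inQ x)) lP).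
  split; [apply NoDup_filter; assumption|split].
  - pose proof (filter_length inQ lP). lia.
  - intro x. rewrite filter_In, IP, Bool.negb_true_iff, <- HinQ.
    destruct (inQ x); intuition congruence.
Qed.

Lemma card_eq_2_other {P : nat -> Prop} {v} :
  card_eq P 2 -> P v -> exists r, r <> v /\ P r /\ forall y, P y -> y = v \/ y = r.
Proof.
  intros [[|r1 [|r2 [|r3 l]]] [Hnd [Hlen Hin]]] Hv; try discriminate.
  apply NoDup_cons_iff in Hnd as [Hr12 _].
  assert (Hall : forall y, P y -> y = r1 \/ y = r2)
    by (intros y Hy; apply Hin in Hy as [|[|[]]]; auto).
  destruct (Hall v Hv) as [<- | <-];
    [exists r2 | exists r1]; repeat split;
    try (apply Hin; simpl; tauto);
    try (intros y Hy; destruct (Hall y Hy); tauto);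
    intros <-; simpl in Hr12; tauto.
Qed.

Lemma drg_unique_common_neighbour n E D b c :
  simple_graph n E -> distance_regular n E D b c -> b 0%nat = (b 1%nat + 2)%nat ->
  forall v w, E v w -> exists m, unique_common_neighbour E v w m.
Proof.
  intros [Hbound [Hsym Hirr]] [Hconn [_ [_ [Hdiam [Hb _]]]]] Hb0 v w Hvw.
  destruct (Hbound _ _ Hvw) as [Hv Hw].
  assert (Hvw1 := dist_edge Hirr Hvw).
  assert (HD : (1 <= D)%nat) by exact (Hdiam v w 1%nat Hv Hw Hvw1).
  assert (Hnbr : card_eq (E w) (b 1%nat + 2)).
  { rewrite <- Hb0.
    apply (card_eq_ext (P := fun x => E w x /\ Defs.dist E w x 1)).
    - intro x. split; [tauto|]. intro Hwx. exact (conj Hwx (dist_edge Hirr Hwx)).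
    - exact (Hb 0%nat w w ltac:(lia) Hw Hw (dist_refl E w)). }
  assert (Hnear := card_eq_diff Hnbr (Hb 1%nat v w HD Hv Hw Hvw1) (fun x Hx => proj1 Hx)).
  assert (Hnot2 : forall x d, Defs.dist E v x d -> (d < 2)%nat ->
                    ~ (E w x /\ Defs.dist E v x 2)).
  { intros x d Hd Hlt [_ H2]. rewrite (dist_unique Hd H2) in Hlt. lia. }
  assert (Hv_near := conj (Hsym _ _ Hvw) (Hnot2 v 0%nat (dist_refl E v) ltac:(lia))).
  destruct (card_eq_2_other Hnear Hv_near) as [r [Hrv [[Hwr Hr2] Hnear2]]].
  exists r. split; [|split; [exact Hwr|]].
  - destruct (Hbound _ _ Hwr) as [_ Hr].
    destruct (Hconn v r Hv Hr) as [d [Hwalk Hmin]].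
    assert (Hd2 : (d <= 2)%nat).
    { apply Hmin, walkS with w, walkS with r; [exact Hvw | exact Hwr | apply walk0]. }
    destruct d as [|[|[|d]]]; [| now apply walk_1_inv | | lia].
    + apply walk_0_inv in Hwalk. congruence.
    + exfalso. apply Hr2. split; [exact Hwr | split; assumption].
  - intros x Hvx Hwx.
    assert (Hx_near := conj Hwx (Hnot2 x 1%nat (dist_edge Hirr Hvx) ltac:(lia))).
    destruct (Hnear2 x Hx_near) as [-> | ->].
    + contradiction (Hirr v).
    + reflexivity.
Qed.

Theorem lemma3p5 :
  (forall (n : nat) (E : nat -> nat -> Prop),
     simple_graph n E ->
     (forall i k, E i k ->
        exists m, E i m /\ E k m /\ (forall m', E i m' -> E k m' -> m' = m)) ->
     Gaut_plus_eq_star n E) /\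
  (forall (n : nat) (E : nat -> nat -> Prop) (D : nat) (b c : nat -> nat),
     simple_graph n E ->
     distance_regular n E D b c ->
     b 0%nat = (b 1%nat + 2)%nat ->
     Gaut_plus_eq_star n E).
Proof.
  split.
  - exact Gaut_plus_eq_star_of_unique_common_neighbours.
  - intros n E D b c HE Hdrg Hb.
    apply Gaut_plus_eq_star_of_unique_common_neighbours; [exact HE|].
    exact (drg_unique_common_neighbour HE Hdrg Hb).
Qed.
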